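(* Let $\mathcal C$ be a monoidal model category. (i) If $B$ is monoidally cofibrant, then $-\otimes B\colon\mathcal C\to\mathcal C$ is a left Quillen functor. (ii) If $a\colon A\to A'$ and $b\colon B\to B'$ are cofibrations with monoidally cofibrant source, then the pushout product $a\square b$ is a cofibration with monoidally cofibrant source. If moreover $A$ or $B$ is cofibrant, then the source of $a\square b$ is cofibrant.
   Context: An object $A$ of a monoidal model category is monoidally cofibrant if there is a cofibration $1\to A$ from the monoidal unit. For $a\colon A\to A'$, $b\colon B\to B'$, the pushout product is $a\square b\colon A\otimes B'\sqcup_{A\otimes B}A'\otimes B\to A'\otimes B'$. Monoidal model category in Hovey's sense, unit axiom not required. *)

Set Universe Polymorphism.


Declare Scope cat_scope.
Open Scope cat_scope.

Record Category@{o h} := {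
  ob :> Type@{o};
  hom : ob -> ob -> Type@{h};
  idm : forall X, hom X X;
  cmp : forall X Y Z, hom Y Z -> hom X Y -> hom X Z;
  cmp_idl : forall X Y (f : hom X Y), cmp X Y Y (idm Y) f = f;
  cmp_idr : forall X Y (f : hom X Y), cmp X X Y f (idm X) = f;
  cmp_assoc : forall X Y Z W (f : hom X Y) (g : hom Y Z) (k : hom Z W),
      cmp X Z W k (cmp X Y Z g f) = cmp X Y W (cmp Y Z W k g) f
}.
Arguments hom {_} X Y.
Arguments idm {_} X.
Arguments cmp {_ X Y Z} g f.
Notation "g ∘ f" := (cmp g f) (at level 40, left associativity) : cat_scope.

Definition is_iso {C : Category} {X Y : C} (f : hom X Y) : Prop :=
  exists g : hom Y X, g ∘ f = idm X /\ f ∘ g = idm Y.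

Record Functor (C D : Category) := {
  fob :> C -> D;
  fmap : forall X Y : C, hom X Y -> hom (fob X) (fob Y);
  fmap_id : forall X, fmap X X (idm X) = idm (fob X);
  fmap_cmp : forall X Y Z (f : hom X Y) (g : hom Y Z),
      fmap X Z (g ∘ f) = fmap Y Z g ∘ fmap X Y f
}.
Arguments fmap {C D} _ {X Y} _.

Definition has_right_adjoint {C D : Category} (F : Functor C D) : Prop :=
  exists (G : Functor D C)
         (eta : forall X : C, hom X (G (F X)))
         (eps : forall Y : D, hom (F (G Y)) Y),
    (forall (X X' : C) (f : hom X X'), fmap G (fmap F f) ∘ eta X = eta X' ∘ f) /\
    (forall (Y Y' : D) (g : hom Y Y'), g ∘ eps Y = eps Y' ∘ fmap F (fmap G g)) /\
    (forall X : C, eps (F X) ∘ fmap F (eta X) = idm (F X)) /\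
    (forall Y : D, fmap G (eps Y) ∘ eta (G Y) = idm (G Y)).

(** * Small limits and colimits (index categories with objects and
      morphisms in the hom-universe h of C) *)
Definition is_limit@{o h} {J : Category@{h h}} {C : Category@{o h}}
    (D : Functor J C) (L : C) (pi : forall j : J, hom L (D j)) : Prop :=
  (forall (j k : J) (u : hom j k), fmap D u ∘ pi j = pi k) /\
  (forall (X : C) (s : forall j : J, hom X (D j)),
      (forall (j k : J) (u : hom j k), fmap D u ∘ s j = s k) ->
      exists! m : hom X L, forall j, pi j ∘ m = s j).

Definition is_colimit@{o h} {J : Category@{h h}} {C : Category@{o h}}
    (D : Functor J C) (L : C) (iota : forall j : J, hom (D j) L) : Prop :=
  (forall (j k : J) (u : hom j k), iota k ∘ fmap D u = iota j) /\
  (forall (X : C) (s : forall j : J, hom (D j) X),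
      (forall (j k : J) (u : hom j k), s k ∘ fmap D u = s j) ->
      exists! m : hom L X, forall j, m ∘ iota j = s j).

Definition complete@{o h} (C : Category@{o h}) : Prop :=
  forall (J : Category@{h h}) (D : Functor J C),
    exists (L : C) (pi : forall j : J, hom L (D j)), is_limit D L pi.

Definition cocomplete@{o h} (C : Category@{o h}) : Prop :=
  forall (J : Category@{h h}) (D : Functor J C),
    exists (L : C) (iota : forall j : J, hom (D j) L), is_colimit D L iota.

Definition is_pushout {C : Category} {X Y Z P : C}
    (f : hom X Y) (g : hom X Z) (i1 : hom Y P) (i2 : hom Z P) : Prop :=
  i1 ∘ f = i2 ∘ g /\
  (forall (Q : C) (u : hom Y Q) (v : hom Z Q), u ∘ f = v ∘ g ->
      exists! m : hom P Q, m ∘ i1 = u /\ m ∘ i2 = v).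

Definition is_initial {C : Category} (Z : C) : Prop :=
  forall X : C, exists! f : hom Z X, True.

Definition MorClass (C : Category) := forall X Y : C, hom X Y -> Prop.

Definition is_retract {C : Category} {A B A' B' : C}
    (f : hom A B) (g : hom A' B') : Prop :=
  exists (i : hom A A') (r : hom A' A) (i' : hom B B') (r' : hom B' B),
    r ∘ i = idm A /\ r' ∘ i' = idm B /\ g ∘ i = i' ∘ f /\ f ∘ r = r' ∘ g.

Definition llp {C : Category} {A B X Y : C} (i : hom A B) (p : hom X Y) : Prop :=
  forall (top : hom A X) (bot : hom B Y), p ∘ top = bot ∘ i ->
    exists d : hom B X, d ∘ i = top /\ p ∘ d = bot.

(** Functorial factorization (Hovey, Def. 1.1.1): a pair of functors
    (l, r) : Map C -> Map C with f = r(f) ∘ l(f). *)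
Record FunctorialFactorization (C : Category) := {
  ff_mid : forall X Y : C, hom X Y -> C;
  ff_l : forall (X Y : C) (f : hom X Y), hom X (ff_mid X Y f);
  ff_r : forall (X Y : C) (f : hom X Y), hom (ff_mid X Y f) Y;
  ff_fact : forall (X Y : C) (f : hom X Y), ff_r X Y f ∘ ff_l X Y f = f;
  ff_map : forall (X Y X' Y' : C) (f : hom X Y) (g : hom X' Y')
             (u : hom X X') (v : hom Y Y'), g ∘ u = v ∘ f ->
             hom (ff_mid X Y f) (ff_mid X' Y' g);
  ff_map_l : forall (X Y X' Y' : C) (f : hom X Y) (g : hom X' Y') u v
               (H : g ∘ u = v ∘ f),
               ff_l X' Y' g ∘ u = ff_map X Y X' Y' f g u v H ∘ ff_l X Y f;
  ff_map_r : forall (X Y X' Y' : C) (f : hom X Y) (g : hom X' Y') u v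
               (H : g ∘ u = v ∘ f),
               ff_r X' Y' g ∘ ff_map X Y X' Y' f g u v H = v ∘ ff_r X Y f;
  ff_map_id : forall (X Y : C) (f : hom X Y) (H : f ∘ idm X = idm Y ∘ f),
               ff_map X Y X Y f f (idm X) (idm Y) H = idm (ff_mid X Y f);
  ff_map_cmp : forall (X Y X' Y' X'' Y'' : C) (f : hom X Y) (g : hom X' Y')
                 (k : hom X'' Y'') u v u' v'
                 (H1 : g ∘ u = v ∘ f) (H2 : k ∘ u' = v' ∘ g)
                 (H3 : k ∘ (u' ∘ u) = (v' ∘ v) ∘ f),
                 ff_map X Y X'' Y'' f k (u' ∘ u) (v' ∘ v) H3 =
                 ff_map X' Y' X'' Y'' g k u' v' H2 ∘ ff_map X Y X' Y' f g u v H1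
}.
Arguments ff_mid {C} _ {X Y} _.
Arguments ff_l {C} _ {X Y} _.
Arguments ff_r {C} _ {X Y} _.

Definition subcategory {C : Category} (K : MorClass C) : Prop :=
  (forall X : C, K X X (idm X)) /\
  (forall (X Y Z : C) (f : hom X Y) (g : hom Y Z), K _ _ f -> K _ _ g -> K _ _ (g ∘ f)).

Definition retract_closed {C : Category} (K : MorClass C) : Prop :=
  forall (A B A' B' : C) (f : hom A B) (g : hom A' B'),
    is_retract f g -> K _ _ g -> K _ _ f.

Record ModelStructure (C : Category) := {
  weq : MorClass C;
  cof : MorClass C;
  fib : MorClass C;
  fact_cof_tfib : FunctorialFactorization C;
  fact_tcof_fib : FunctorialFactorization C;
  weq_subcat : subcategory weq;
  cof_subcat : subcategory cof;
  fib_subcat : subcategory fib;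
  weq_2of3 : forall (X Y Z : C) (f : hom X Y) (g : hom Y Z),
      (weq _ _ f -> weq _ _ g -> weq _ _ (g ∘ f)) /\
      (weq _ _ f -> weq _ _ (g ∘ f) -> weq _ _ g) /\
      (weq _ _ g -> weq _ _ (g ∘ f) -> weq _ _ f);
  weq_retract : retract_closed weq;
  cof_retract : retract_closed cof;
  fib_retract : retract_closed fib;
  lift_cof_tfib : forall (A B X Y : C) (i : hom A B) (p : hom X Y),
      cof _ _ i -> fib _ _ p -> weq _ _ p -> llp i p;
  lift_tcof_fib : forall (A B X Y : C) (i : hom A B) (p : hom X Y),
      cof _ _ i -> weq _ _ i -> fib _ _ p -> llp i p;
  fact1_spec : forall (X Y : C) (f : hom X Y),
      cof _ _ (ff_l fact_cof_tfib f) /\ fib _ _ (ff_r fact_cof_tfib f) /\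
      weq _ _ (ff_r fact_cof_tfib f);
  fact2_spec : forall (X Y : C) (f : hom X Y),
      cof _ _ (ff_l fact_tcof_fib f) /\ weq _ _ (ff_l fact_tcof_fib f) /\
      fib _ _ (ff_r fact_tcof_fib f)
}.
Arguments weq {C} _ {X Y} _.
Arguments cof {C} _ {X Y} _.
Arguments fib {C} _ {X Y} _.

Definition cofibrant {C : Category} (M : ModelStructure C) (X : C) : Prop :=
  exists (Z : C) (z : hom Z X), is_initial Z /\ cof M z.

Record Monoidal (C : Category) := {
  tens : C -> C -> C;
  tensm : forall X Y X' Y' : C, hom X X' -> hom Y Y' -> hom (tens X Y) (tens X' Y');
  tensm_id : forall X Y : C, tensm X Y X Y (idm X) (idm Y) = idm (tens X Y);
  tensm_cmp : forall (X Y X' Y' X'' Y'' : C) (f : hom X X') (f' : hom X' X'')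
                (g : hom Y Y') (g' : hom Y' Y''),
      tensm _ _ _ _ (f' ∘ f) (g' ∘ g) = tensm _ _ _ _ f' g' ∘ tensm _ _ _ _ f g;
  unit : C;
  assoc : forall X Y Z : C, hom (tens (tens X Y) Z) (tens X (tens Y Z));
  lunit : forall X : C, hom (tens unit X) X;
  runit : forall X : C, hom (tens X unit) X;
  assoc_iso : forall X Y Z, is_iso (assoc X Y Z);
  lunit_iso : forall X, is_iso (lunit X);
  runit_iso : forall X, is_iso (runit X);
  assoc_nat : forall (X Y Z X' Y' Z' : C) (f : hom X X') (g : hom Y Y') (k : hom Z Z'),
      assoc X' Y' Z' ∘ tensm _ _ _ _ (tensm _ _ _ _ f g) k =
      tensm _ _ _ _ f (tensm _ _ _ _ g k) ∘ assoc X Y Z;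
  lunit_nat : forall (X X' : C) (f : hom X X'),
      lunit X' ∘ tensm _ _ _ _ (idm unit) f = f ∘ lunit X;
  runit_nat : forall (X X' : C) (f : hom X X'),
      runit X' ∘ tensm _ _ _ _ f (idm unit) = f ∘ runit X;
  pentagon : forall W X Y Z : C,
      assoc W X (tens Y Z) ∘ assoc (tens W X) Y Z =
      tensm _ _ _ _ (idm W) (assoc X Y Z) ∘ assoc W (tens X Y) Z
        ∘ tensm _ _ _ _ (assoc W X Y) (idm Z);
  triangle : forall X Y : C,
      tensm _ _ _ _ (idm X) (lunit Y) ∘ assoc X unit Y = tensm _ _ _ _ (runit X) (idm Y)
}.
Arguments tens {C} _ _ _.
Arguments tensm {C} _ {X Y X' Y'} _ _.
Arguments unit {C} _.

Lemma tensor_right_id (C : Category) (T : Monoidal C) (B : C) (X : C) :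
  tensm T (idm X) (idm B) = idm (tens T X B).
Proof. apply tensm_id. Qed.

Lemma tensor_right_cmp (C : Category) (T : Monoidal C) (B : C) (X Y Z : C)
  (f : hom X Y) (g : hom Y Z) :
  tensm T (g ∘ f) (idm B) = tensm T g (idm B) ∘ tensm T f (idm B).
Proof. rewrite <- tensm_cmp. rewrite cmp_idl. reflexivity. Qed.

Lemma tensor_left_id (C : Category) (T : Monoidal C) (B : C) (X : C) :
  tensm T (idm B) (idm X) = idm (tens T B X).
Proof. apply tensm_id. Qed.

Lemma tensor_left_cmp (C : Category) (T : Monoidal C) (B : C) (X Y Z : C)
  (f : hom X Y) (g : hom Y Z) :
  tensm T (idm B) (g ∘ f) = tensm T (idm B) g ∘ tensm T (idm B) f.
Proof. rewrite <- tensm_cmp. rewrite cmp_idl. reflexivity. Qed.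

Definition tensor_right {C : Category} (T : Monoidal C) (B : C) : Functor C C :=
  {| fob := fun X => tens T X B;
     fmap := fun X Y f => tensm T f (idm B);
     fmap_id := tensor_right_id C T B;
     fmap_cmp := tensor_right_cmp C T B |}.

Definition tensor_left {C : Category} (T : Monoidal C) (B : C) : Functor C C :=
  {| fob := fun X => tens T B X;
     fmap := fun X Y f => tensm T (idm B) f;
     fmap_id := tensor_left_id C T B;
     fmap_cmp := tensor_left_cmp C T B |}.

(** Closed monoidal (Hovey, Def. 4.1.13 for the non-symmetric case):
    both - ⊗ B and B ⊗ - have right adjoints. *)
Definition closed {C : Category} (T : Monoidal C) : Prop :=
  forall B : C, has_right_adjoint (tensor_right T B) /\ has_right_adjoint (tensor_left T B).

(** For a : A -> A', b : B -> B', the data (P, i1, i2, m) is a pushout product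
    a □ b : P = A⊗B' ⊔_{A⊗B} A'⊗B -> A'⊗B'. *)
Definition is_pushout_product {C : Category} (T : Monoidal C)
    {A A' B B' : C} (a : hom A A') (b : hom B B')
    (P : C) (i1 : hom (tens T A B') P) (i2 : hom (tens T A' B) P)
    (m : hom P (tens T A' B')) : Prop :=
  is_pushout (tensm T (idm A) b) (tensm T a (idm B)) i1 i2 /\
  m ∘ i1 = tensm T a (idm B') /\ m ∘ i2 = tensm T (idm A') b.

Definition pushout_product_axiom {C : Category} (M : ModelStructure C)
    (T : Monoidal C) : Prop :=
  forall (A A' B B' : C) (a : hom A A') (b : hom B B'),
    cof M a -> cof M b ->
    forall P i1 i2 (m : hom P (tens T A' B')),
      is_pushout_product T a b P i1 i2 m ->
      cof M m /\ ((weq M a \/ weq M b) -> weq M m).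

(** Monoidal model category in Hovey's sense (Def. 4.2.6), unit axiom not
    required: a bicomplete category with a model structure and a closed
    monoidal structure satisfying the pushout product axiom. *)
Definition is_monoidal_model_category {C : Category} (M : ModelStructure C)
    (T : Monoidal C) : Prop :=
  complete C /\ cocomplete C /\ closed T /\ pushout_product_axiom M T.

Definition monoidally_cofibrant {C : Category} (M : ModelStructure C)
    (T : Monoidal C) (X : C) : Prop :=
  exists u : hom (unit T) X, cof M u.

Definition is_left_Quillen {C D : Category} (MC : ModelStructure C)
    (MD : ModelStructure D) (F : Functor C D) : Prop :=
  has_right_adjoint F /\
  (forall (X Y : C) (f : hom X Y), cof MC f -> cof MD (fmap F f)) /\
  (forall (X Y : C) (f : hom X Y), cof MC f -> weq MC f ->
      cof MD (fmap F f) /\ weq MD (fmap F f)).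

(* Tensoring with a monoidally cofibrant object v : 1 -> B is a left Quillen functor because
   f ⊗ B factors as the cobase change of f ⊗ 1 ≅ f followed by the pushout product f □ v,
   both (trivial) cofibrations.  For (ii), the first leg A ⊗ B' -> P of the pushout defining
   a □ b is a cobase change of the cofibration a ⊗ B, so monoidal cofibrancy and cofibrancy
   of P are inherited from A ⊗ B', and A ⊗ B' inherits them from A and B' (left adjoints
   preserve initial objects). *)
Set Universe Polymorphism.
Open Scope cat_scope.

Section CategoryFacts.
Context {C : Category}.

Lemma retract_closed_iso_conj (K : MorClass C) (HK : retract_closed K)
    {X Y X' Y' : C} (f : hom X Y) (f' : hom X' Y') (al : hom X' X) (be : hom Y' Y) :
  is_iso al -> is_iso be -> be ∘ f' = f ∘ al -> K _ _ f -> K _ _ f'.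
Proof.
  intros [ai [Ha1 Ha2]] [bi [Hb1 Hb2]] E Hf.
  apply (HK _ _ _ _ f' f); [|exact Hf].
  exists al, ai, be, bi. split; [exact Ha1|]. split; [exact Hb1|].
  split; [symmetry; exact E|].
  transitivity (bi ∘ be ∘ f' ∘ ai).
  { rewrite Hb1, cmp_idl. reflexivity. }
  rewrite <- (cmp_assoc _ _ _ _ _ f' be bi), E, (cmp_assoc _ _ _ _ _ al f bi),
    <- (cmp_assoc _ _ _ _ _ ai al), Ha2, cmp_idr.
  reflexivity.
Qed.

Lemma retract_closed_iso (K : MorClass C) (HK : retract_closed K)
    (Hid : forall X, K X X (idm X)) {X Y : C} (g : hom X Y) :
  is_iso g -> K _ _ g.
Proof.
  intros Hg. apply (retract_closed_iso_conj K HK (idm Y) g g (idm Y)); auto.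
  exists (idm Y); split; apply cmp_idl.
Qed.

Lemma pushout_sym {X Y Z P : C} (f : hom X Y) (g : hom X Z) (i1 : hom Y P) (i2 : hom Z P) :
  is_pushout f g i1 i2 -> is_pushout g f i2 i1.
Proof.
  intros [E U]. split; [symmetry; exact E|].
  intros Q u v Euv. destruct (U Q v u (eq_sym Euv)) as [m [[H1 H2] Hu]].
  exists m. split; [tauto|]. intros m' [H1' H2']. apply Hu. tauto.
Qed.

Lemma llp_pushout {X Y Z P E B : C} (f : hom X Y) (g : hom X Z)
    (i1 : hom Y P) (i2 : hom Z P) (p : hom E B) :
  is_pushout f g i1 i2 -> llp g p -> llp i1 p.
Proof.
  intros [Eq U] Hl top bot Hsq.
  destruct (Hl (top ∘ f) (bot ∘ i2)) as [d [Hd1 Hd2]].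
  { rewrite cmp_assoc, Hsq, <- cmp_assoc, Eq, cmp_assoc. reflexivity. }
  destruct (U E top d (eq_sym Hd1)) as [m [[Hm1 Hm2] _]].
  exists m. split; [exact Hm1|].
  (* p ∘ m and bot are both induced by the cocone (p ∘ top, p ∘ d). *)
  destruct (U B (p ∘ top) (p ∘ d)) as [n [_ Hn]].
  { rewrite <- !cmp_assoc, Hd1. reflexivity. }
  transitivity n; [symmetry|]; apply Hn; split.
  - rewrite <- cmp_assoc, Hm1. reflexivity.
  - rewrite <- cmp_assoc, Hm2. reflexivity.
  - rewrite Hsq. reflexivity.
  - rewrite Hd2. reflexivity.
Qed.

Lemma retract_of_llp_factor {A B Z : C} (i : hom A B) (l : hom A Z) (r : hom Z B) :
  r ∘ l = i -> llp i r -> is_retract i l.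
Proof.
  intros Hi Hl.
  destruct (Hl l (idm B)) as [d [Hd1 Hd2]].
  { rewrite Hi, cmp_idl. reflexivity. }
  exists (idm A), (idm A), d, r.
  split; [apply cmp_idl|]. split; [exact Hd2|].
  split; [rewrite cmp_idr; symmetry; exact Hd1|].
  rewrite cmp_idr, Hi. reflexivity.
Qed.

Lemma left_adjoint_preserves_initial {D : Category} {F : Functor C D}
    (HF : has_right_adjoint F) (Z : C) :
  is_initial Z -> is_initial (F Z).
Proof.
  intros HZ X. destruct HF as [G [eta [eps [_ [Hn2 [Ht1 _]]]]]].
  destruct (HZ (G X)) as [k [_ Hk]].
  assert (Hrep : forall f : hom (F Z) X, f = eps X ∘ fmap F (fmap G f ∘ eta Z)).
  { intros f. rewrite fmap_cmp, cmp_assoc, <- Hn2, <- cmp_assoc, Ht1, cmp_idr.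
    reflexivity. }
  exists (eps X ∘ fmap F k). split; [exact I|].
  intros f _. rewrite (Hrep f). do 2 f_equal. apply Hk. exact I.
Qed.

End CategoryFacts.

Section ModelCategoryFacts.
Context {C : Category} (M : ModelStructure C).

Lemma cof_cmp {X Y Z : C} (f : hom X Y) (g : hom Y Z) :
  cof M f -> cof M g -> cof M (g ∘ f).
Proof. apply (cof_subcat C M). Qed.

Lemma cof_iso {X Y : C} (g : hom X Y) : is_iso g -> cof M g.
Proof. apply (retract_closed_iso _ (cof_retract C M) (proj1 (cof_subcat C M))). Qed.

Lemma cof_of_llp {A B : C} (i : hom A B) :
  (forall X Y (p : hom X Y), fib M p -> weq M p -> llp i p) -> cof M i.
Proof.
  intros H. set (F := fact_cof_tfib C M).
  destruct (fact1_spec C M A B i) as [Hl [Hr1 Hr2]].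
  apply (cof_retract C M _ _ _ _ i (ff_l F i)); [|exact Hl].
  apply (retract_of_llp_factor _ _ (ff_r F i)); [apply ff_fact | auto].
Qed.

Lemma tcof_of_llp {A B : C} (i : hom A B) :
  (forall X Y (p : hom X Y), fib M p -> llp i p) -> cof M i /\ weq M i.
Proof.
  intros H. set (F := fact_tcof_fib C M).
  destruct (fact2_spec C M A B i) as [Hl1 [Hl2 Hr]].
  assert (R : is_retract i (ff_l F i)).
  { apply (retract_of_llp_factor _ _ (ff_r F i)); [apply ff_fact | auto]. }
  split; [exact (cof_retract C M _ _ _ _ _ _ R Hl1)
         | exact (weq_retract C M _ _ _ _ _ _ R Hl2)].
Qed.

Lemma cof_pushout {X Y Z P : C} (f : hom X Y) (g : hom X Z) (i1 : hom Y P) (i2 : hom Z P) :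
  is_pushout f g i1 i2 -> cof M g -> cof M i1.
Proof.
  intros Hp Hg. apply cof_of_llp. intros E B p Hf Hw.
  apply (llp_pushout f g i1 i2 p Hp), (lift_cof_tfib C M); auto.
Qed.

Lemma weq_pushout {X Y Z P : C} (f : hom X Y) (g : hom X Z) (i1 : hom Y P) (i2 : hom Z P) :
  is_pushout f g i1 i2 -> cof M g -> weq M g -> weq M i1.
Proof.
  intros Hp Hg Hw. apply tcof_of_llp. intros E B p Hf.
  apply (llp_pushout f g i1 i2 p Hp), (lift_tcof_fib C M); auto.
Qed.

Lemma cofibrant_cof {X Y : C} (f : hom X Y) : cofibrant M X -> cof M f -> cofibrant M Y.
Proof.
  intros [Z [z [HZ Hz]]] Hf. exists Z, (f ∘ z). split; [exact HZ | exact (cof_cmp z f Hz Hf)].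
Qed.

End ModelCategoryFacts.

Inductive span_ob : Set := span_apex | span_left | span_right.

Definition span_hom (x y : span_ob) : Set :=
  match x, y with
  | span_apex, _ | span_left, span_left | span_right, span_right => Datatypes.unit
  | _, _ => Empty_set
  end.

Definition span_id (x : span_ob) : span_hom x x :=
  match x with span_apex | span_left | span_right => tt end.

Definition span_cmp (x y z : span_ob) (g : span_hom y z) (f : span_hom x y) : span_hom x z.
Proof. destruct x, y, z; simpl in *; try exact tt; solve [destruct f | destruct g]. Defined.

Lemma span_hom_eq (x y : span_ob) (f g : span_hom x y) : f = g.
Proof. destruct x, y; simpl in *; destruct f; try destruct g; reflexivity. Defined.

Definition SpanCat@{u} : Category@{u u}.
Proof.
  refine {| ob := span_ob; hom := span_hom; idm := span_id; cmp := span_cmp |};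
  intros; apply span_hom_eq.
Defined.

Section Pushouts.
Context {C : Category}.

Definition span_diagram_ob {X Y Z : C} (f : hom X Y) (g : hom X Z) (x : span_ob) : C :=
  match x with span_apex => X | span_left => Y | span_right => Z end.

Definition span_diagram_map {X Y Z : C} (f : hom X Y) (g : hom X Z) (x y : span_ob) :
  span_hom x y -> hom (span_diagram_ob f g x) (span_diagram_ob f g y).
Proof.
  destruct x, y; simpl; intros h; try destruct h.
  all: first [exact (idm _) | exact f | exact g].
Defined.

Definition span_diagram {X Y Z : C} (f : hom X Y) (g : hom X Z) : Functor SpanCat C.
Proof.
  refine {| fob := span_diagram_ob f g : SpanCat -> C; fmap := span_diagram_map f g |}.
  - intros x; destruct x; reflexivity.
  - intros x y z h k; destruct x, y, z; simpl in *;
    try destruct h; try destruct k; simpl;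
    first [rewrite cmp_idl; reflexivity | rewrite cmp_idr; reflexivity].
Defined.

Lemma pushout_exists (Hcc : cocomplete C) {X Y Z : C} (f : hom X Y) (g : hom X Z) :
  exists P (i1 : hom Y P) (i2 : hom Z P), is_pushout f g i1 i2.
Proof.
  destruct (Hcc SpanCat (span_diagram f g)) as [L [iota [Hc U]]].
  exists L, (iota span_left), (iota span_right).
  assert (E1 : iota span_left ∘ f = iota span_apex) by exact (Hc span_apex span_left tt).
  assert (E2 : iota span_right ∘ g = iota span_apex) by exact (Hc span_apex span_right tt).
  split; [exact (eq_trans E1 (eq_sym E2))|].
  intros Q u v Huv.
  set (s := fun j : SpanCat => match j return hom (span_diagram_ob f g j) Q with
            | span_apex => u ∘ f | span_left => u | span_right => v end).
  destruct (U Q s) as [m [Hm Hu]].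
  { intros j k h; destruct j, k; simpl in *; try destruct h; simpl;
    first [apply cmp_idr | reflexivity | symmetry; exact Huv]. }
  exists m. split; [split; [exact (Hm span_left) | exact (Hm span_right)]|].
  intros m' [H1 H2]. apply Hu. intros j; destruct j; [| exact H1 | exact H2].
  simpl. rewrite <- E1, <- H1. apply cmp_assoc.
Qed.

End Pushouts.

Section MonoidalModelCategory.
Context {C : Category} (M : ModelStructure C) (T : Monoidal C).

Lemma tensm_idr_idl {X Y X' Y' : C} (f : hom X X') (g : hom Y Y') :
  tensm T f (idm Y') ∘ tensm T (idm X) g = tensm T f g.
Proof. rewrite <- tensm_cmp, cmp_idr, cmp_idl. reflexivity. Qed.

Lemma tensm_idl_idr {X Y X' Y' : C} (f : hom X X') (g : hom Y Y') :
  tensm T (idm X') g ∘ tensm T f (idm Y) = tensm T f g.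
Proof. rewrite <- tensm_cmp, cmp_idr, cmp_idl. reflexivity. Qed.

Lemma retract_closed_tensm_unit_r (K : MorClass C) (HK : retract_closed K)
    {X Y : C} (f : hom X Y) :
  K _ _ f -> K _ _ (tensm T f (idm (unit T))).
Proof.
  apply (retract_closed_iso_conj K HK f _ (runit _ T X) (runit _ T Y));
    [apply runit_iso | apply runit_iso | apply runit_nat].
Qed.

Lemma retract_closed_tensm_unit_l (K : MorClass C) (HK : retract_closed K)
    {X Y : C} (g : hom X Y) :
  K _ _ g -> K _ _ (tensm T (idm (unit T)) g).
Proof.
  apply (retract_closed_iso_conj K HK g _ (lunit _ T X) (lunit _ T Y));
    [apply lunit_iso | apply lunit_iso | apply lunit_nat].
Qed.

Lemma monoidally_cofibrant_cof {X Y : C} (f : hom X Y) :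
  monoidally_cofibrant M T X -> cof M f -> monoidally_cofibrant M T Y.
Proof. intros [u Hu] Hf. exists (f ∘ u). exact (cof_cmp M u f Hu Hf). Qed.

Hypothesis Hcocomplete : cocomplete C.

Lemma pushout_product_exists {A A' B B' : C} (a : hom A A') (b : hom B B') :
  exists P i1 i2 m, is_pushout_product T a b P i1 i2 m.
Proof.
  destruct (pushout_exists Hcocomplete (tensm T (idm A) b) (tensm T a (idm B)))
    as [P [i1 [i2 Hp]]].
  destruct (proj2 Hp _ (tensm T a (idm B')) (tensm T (idm A') b)) as [m [[H1 H2] _]].
  { rewrite tensm_idr_idl, tensm_idl_idr. reflexivity. }
  exists P, i1, i2, m. exact (conj Hp (conj H1 H2)).
Qed.

Hypothesis Hppa : pushout_product_axiom M T.

Lemma cof_tensm_right (B : C) {X Y : C} (f : hom X Y) :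
  monoidally_cofibrant M T B -> cof M f -> cof M (tensm T f (idm B)).
Proof.
  intros [v Hv] Hf.
  destruct (pushout_product_exists f v) as [P [i1 [i2 [m Hpp]]]].
  pose proof Hpp as [Hp [Hm1 _]].
  rewrite <- Hm1. apply cof_cmp.
  - exact (cof_pushout M _ _ _ _ Hp (retract_closed_tensm_unit_r _ (cof_retract C M) f Hf)).
  - exact (proj1 (Hppa _ _ _ _ f v Hf Hv P i1 i2 m Hpp)).
Qed.

Lemma weq_tensm_right (B : C) {X Y : C} (f : hom X Y) :
  monoidally_cofibrant M T B -> cof M f -> weq M f -> weq M (tensm T f (idm B)).
Proof.
  intros [v Hv] Hf Hw.
  destruct (pushout_product_exists f v) as [P [i1 [i2 [m Hpp]]]].
  pose proof Hpp as [Hp [Hm1 _]].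
  rewrite <- Hm1. apply (weq_subcat C M).
  - apply (weq_pushout M _ _ _ _ Hp).
    + exact (retract_closed_tensm_unit_r _ (cof_retract C M) f Hf).
    + exact (retract_closed_tensm_unit_r _ (weq_retract C M) f Hw).
  - exact (proj2 (Hppa _ _ _ _ f v Hf Hv P i1 i2 m Hpp) (or_introl Hw)).
Qed.

Lemma cof_tensm_left (A : C) {X Y : C} (g : hom X Y) :
  monoidally_cofibrant M T A -> cof M g -> cof M (tensm T (idm A) g).
Proof.
  intros [u Hu] Hg.
  destruct (pushout_product_exists u g) as [P [i1 [i2 [m Hpp]]]].
  pose proof Hpp as [Hp [_ Hm2]].
  rewrite <- Hm2. apply cof_cmp.
  - exact (cof_pushout M _ _ _ _ (pushout_sym _ _ _ _ Hp)
             (retract_closed_tensm_unit_l _ (cof_retract C M) g Hg)).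
  - exact (proj1 (Hppa _ _ _ _ u g Hu Hg P i1 i2 m Hpp)).
Qed.

(* 1 -> B -> 1 ⊗ B -> A ⊗ B, the middle map being the inverse of the left unitor. *)
Lemma monoidally_cofibrant_tensor (A B : C) :
  monoidally_cofibrant M T A -> monoidally_cofibrant M T B ->
  monoidally_cofibrant M T (tens T A B).
Proof.
  intros [u Hu] [v Hv].
  destruct (lunit_iso C T B) as [li [Hl1 Hl2]].
  exists (tensm T u (idm B) ∘ li ∘ v).
  apply cof_cmp; [exact Hv|]. apply cof_cmp.
  - apply cof_iso. exists (lunit _ T B). split; assumption.
  - apply cof_tensm_right; [exists v; exact Hv | exact Hu].
Qed.

Hypothesis Hclosed : closed T.

Lemma cofibrant_tensor_l (A B : C) :
  cofibrant M A -> monoidally_cofibrant M T B -> cofibrant M (tens T A B).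
Proof.
  intros [Z [z [HZ Hz]]] HB. exists (tens T Z B), (tensm T z (idm B)). split.
  - exact (left_adjoint_preserves_initial (proj1 (Hclosed B)) Z HZ).
  - exact (cof_tensm_right B z HB Hz).
Qed.

Lemma cofibrant_tensor_r (A B : C) :
  monoidally_cofibrant M T A -> cofibrant M B -> cofibrant M (tens T A B).
Proof.
  intros HA [Z [z [HZ Hz]]]. exists (tens T A Z), (tensm T (idm A) z). split.
  - exact (left_adjoint_preserves_initial (proj2 (Hclosed A)) Z HZ).
  - exact (cof_tensm_left A z HA Hz).
Qed.

End MonoidalModelCategory.

Theorem lemma8p4 (C : Category) (M : ModelStructure C) (T : Monoidal C)
  (HC : is_monoidal_model_category M T) :
  (forall B : C, monoidally_cofibrant M T B -> is_left_Quillen M M (tensor_right T B)) /\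
  (forall (A A' B B' : C) (a : hom A A') (b : hom B B'),
     cof M a -> cof M b ->
     monoidally_cofibrant M T A -> monoidally_cofibrant M T B ->
     forall (P : C) (i1 : hom (tens T A B') P) (i2 : hom (tens T A' B) P)
            (m : hom P (tens T A' B')),
       is_pushout_product T a b P i1 i2 m ->
       cof M m /\ monoidally_cofibrant M T P /\
       ((cofibrant M A \/ cofibrant M B) -> cofibrant M P)).
Proof.
  destruct HC as [_ [Hcc [Hcl Hppa]]].
  split.
  - intros B HB. split; [apply Hcl|]. split; intros X Y f Hf; simpl.
    + exact (cof_tensm_right M T Hcc Hppa B f HB Hf).
    + intros Hw. split.
      * exact (cof_tensm_right M T Hcc Hppa B f HB Hf).
      * exact (weq_tensm_right M T Hcc Hppa B f HB Hf Hw).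
  - intros A A' B B' a b Ha Hb HA HB P i1 i2 m Hpp.
    assert (HB' : monoidally_cofibrant M T B') by exact (monoidally_cofibrant_cof M T b HB Hb).
    assert (Hi1 : cof M i1)
      by exact (cof_pushout M _ _ _ _ (proj1 Hpp) (cof_tensm_right M T Hcc Hppa B a HB Ha)).
    split; [exact (proj1 (Hppa _ _ _ _ a b Ha Hb P i1 i2 m Hpp))|].
    split.
    + exact (monoidally_cofibrant_cof M T i1
               (monoidally_cofibrant_tensor M T Hcc Hppa A B' HA HB') Hi1).
    + intros [HcA | HcB]; apply (cofibrant_cof M i1); try exact Hi1.
      * exact (cofibrant_tensor_l M T Hcc Hppa Hcl A B' HcA HB').
      * exact (cofibrant_tensor_r M T Hcc Hppa Hcl A B' HA (cofibrant_cof M b HcB Hb)).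
Qed.
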